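(* Let $\alpha$ be a curve in $\mathbb{R}^3$ with nonzero curvature, let $\alpha_T$ be its tangent indicatrix, and let $\beta$ be a Bertrand-direction curve of $\alpha_T$ (an $X$-direction curve of $\alpha_T$ with $N_\beta=N_T$). Then $\alpha$ is a slant helix if and only if $\beta$ is a helix.
   Context: Let $\alpha:I\subset\mathbb{R}\to\mathbb{R}^3$ be a unit-speed curve with curvature $\kappa>0$, torsion $\tau$ and Frenet frame $\{T,N,B\}$. The tangent indicatrix of $\alpha$ is the curve $\alpha_T=T$ on the unit sphere. Its arc length is $s_T=\int\kappa\,ds$. Its Frenet apparatus is $\{T_T,N_T,B_T,\kappa_T,\tau_T\}$, with $\frac{dT_T}{ds_T}=\kappa_TN_T$, $\frac{dN_T}{ds_T}=-\kappa_TT_T+\tau_TB_T$ and $\frac{dB_T}{ds_T}=-\tau_TN_T$. Let $x,y,z$ be real functions of $s_T$ with $x^2+y^2+z^2=1$, and set $X=xT_T+yN_T+zB_T$. An integral curve $\beta$ of $X$, meaning $d\beta/ds_T=X$, is an $X$-direction curve of $\alpha_T$. It is regarded as a unit-speed Frenet curve with frame $\{T_\beta=X,N_\beta,B_\beta\}$, curvature $\kappa_\beta>0$ and torsion $\tau_\beta$. $\beta$ is a Bertrand-direction curve of $\alpha_T$ if $N_\beta=N_T$. A curve with curvature $k>0$ and torsion $t$ is a helix if its unit tangent makes a constant angle with a fixed line; equivalently, $t/k$ is constant. It is a slant helix if its principal normal makes a constant angle with a fixed line; equivalently, $\frac{k^2}{(k^2+t^2)^{3/2}}(t/k)'$ is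 constant, where $'$ is the derivative with respect to arc length. *)

From Stdlib Require Import Reals.
From Coquelicot Require Import Coquelicot.
Open Scope R_scope.

Definition V3 : Type := (R * R * R)%type.
Definition v1 (v : V3) : R := fst (fst v).
Definition v2 (v : V3) : R := snd (fst v).
Definition v3 (v : V3) : R := snd v.
Definition vadd (u v : V3) : V3 := (v1 u + v1 v, v2 u + v2 v, v3 u + v3 v).
Definition vscal (a : R) (v : V3) : V3 := (a * v1 v, a * v2 v, a * v3 v).
Definition dot (u v : V3) : R := v1 u * v1 v + v2 u * v2 v + v3 u * v3 v.
Definition cross (u v : V3) : V3 :=
  (v2 u * v3 v - v3 u * v2 v, v3 u * v1 v - v1 u * v3 v, v1 u * v2 v - v2 u * v1 v).

Definition vderiv (f : R -> V3) (t : R) (v : V3) : Prop :=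
  is_derive (fun s => v1 (f s)) t (v1 v) /\
  is_derive (fun s => v2 (f s)) t (v2 v) /\
  is_derive (fun s => v3 (f s)) t (v3 v).

Definition inI (a b : Rbar) (s : R) : Prop := Rbar_lt a s /\ Rbar_lt s b.

Definition image (phi : R -> R) (D : R -> Prop) (r : R) : Prop :=
  exists s, D s /\ phi s = r.

Definition frenet (D : R -> Prop) (c T N B : R -> V3) (k t : R -> R) : Prop :=
  forall s, D s ->
    vderiv c s (T s) /\
    vderiv T s (vscal (k s) (N s)) /\
    vderiv N s (vadd (vscal (- k s) (T s)) (vscal (t s) (B s))) /\
    vderiv B s (vscal (- t s) (N s)) /\
    dot (T s) (T s) = 1 /\ dot (N s) (N s) = 1 /\ dot (T s) (N s) = 0 /\
    B s = cross (T s) (N s) /\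
    0 < k s.

Definition is_helix (D : R -> Prop) (T : R -> V3) : Prop :=
  exists u : V3, dot u u = 1 /\ exists c : R, forall s, D s -> dot (T s) u = c.

Definition is_slant_helix (D : R -> Prop) (N : R -> V3) : Prop :=
  exists u : V3, dot u u = 1 /\ exists c : R, forall s, D s -> dot (N s) u = c.

From Stdlib Require Import Reals Lra Classical.
From Coquelicot Require Import Coquelicot.
Open Scope R_scope.

(* Along the curve, the unit tangent of the tangent indicatrix is the
   principal normal N of alpha, and N_beta = N_T.  For a fixed unit vector u,
   differentiating in the arc length s of alpha gives
     <N, u>'           = kappa kappa_T <N_T, u>,
     <T_beta o phi, u>' = kappa kappa_beta <N_T, u>,
   with all curvatures positive.  So on the interval either inner product is
   constant exactly when N_T is orthogonal to u, and the same axis u serves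
   for the slant helix alpha and for the helix beta. *)

Definition constant_on (D : R -> Prop) (f : R -> R) : Prop :=
  exists c, forall s, D s -> f s = c.

Lemma constant_on_ext (D : R -> Prop) (f g : R -> R) :
  (forall s, D s -> f s = g s) -> constant_on D f <-> constant_on D g.
Proof.
  intros Hfg; split; intros [c Hc]; exists c; intros s Hs.
  - rewrite <- Hfg by exact Hs; auto.
  - rewrite Hfg by exact Hs; auto.
Qed.

Lemma constant_on_image (phi : R -> R) (D : R -> Prop) (f : R -> R) :
  constant_on (image phi D) f <-> constant_on D (fun s => f (phi s)).
Proof.
  split; intros [c Hc]; exists c.
  - intros s Hs; apply Hc; exists s; auto.
  - intros r [s [Hs <-]]; auto.
Qed.

Lemma V3_ext (p q : V3) : v1 p = v1 q -> v2 p = v2 q -> v3 p = v3 q -> p = q.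
Proof.
  destruct p as [[p1 p2] p3], q as [[q1 q2] q3]; unfold v1, v2, v3; simpl.
  intros; subst; reflexivity.
Qed.

Lemma dot_vscal_l (k : R) (v u : V3) : dot (vscal k v) u = k * dot v u.
Proof. unfold dot, vscal, v1, v2, v3; simpl; ring. Qed.

Lemma vscal_inj (k : R) (v w : V3) : k <> 0 -> vscal k v = vscal k w -> v = w.
Proof.
  intros Hk E; apply V3_ext; apply (Rmult_eq_reg_l k); auto.
  - exact (f_equal v1 E).
  - exact (f_equal v2 E).
  - exact (f_equal v3 E).
Qed.

Lemma vderiv_unique (F : R -> V3) (t : R) (v w : V3) : vderiv F t v -> vderiv F t w -> v = w.
Proof.
  intros (Hv1 & Hv2 & Hv3) (Hw1 & Hw2 & Hw3); apply V3_ext.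
  - now rewrite <- (is_derive_unique _ _ _ Hv1), (is_derive_unique _ _ _ Hw1).
  - now rewrite <- (is_derive_unique _ _ _ Hv2), (is_derive_unique _ _ _ Hw2).
  - now rewrite <- (is_derive_unique _ _ _ Hv3), (is_derive_unique _ _ _ Hw3).
Qed.

Lemma vderiv_comp (F : R -> V3) (phi : R -> R) (s k : R) (v : V3) :
  vderiv F (phi s) v -> is_derive phi s k ->
  vderiv (fun s => F (phi s)) s (vscal k v).
Proof.
  intros (H1 & H2 & H3) Hphi; split; [|split].
  - exact (is_derive_comp (fun r => v1 (F r)) phi s _ _ H1 Hphi).
  - exact (is_derive_comp (fun r => v2 (F r)) phi s _ _ H2 Hphi).
  - exact (is_derive_comp (fun r => v3 (F r)) phi s _ _ H3 Hphi).
Qed.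

Lemma vderiv_ext_loc (F G : R -> V3) (s : R) (v : V3) :
  locally s (fun t => F t = G t) -> vderiv F s v -> vderiv G s v.
Proof.
  intros Heq (H1 & H2 & H3); split; [|split];
    (eapply is_derive_ext_loc; [|eassumption]);
    (eapply filter_imp; [|exact Heq]); intros t Ht; now rewrite Ht.
Qed.

Lemma is_derive_dot_l (F : R -> V3) (t : R) (v u : V3) :
  vderiv F t v -> is_derive (fun t => dot (F t) u) t (dot v u).
Proof.
  intros (H1 & H2 & H3); unfold dot.
  apply (is_derive_plus (fun t => v1 (F t) * v1 u + v2 (F t) * v2 u)).
  - apply (is_derive_plus (fun t => v1 (F t) * v1 u)).
    + exact (is_derive_scal_l _ _ _ _ H1).
    + exact (is_derive_scal_l _ _ _ _ H2).
  - exact (is_derive_scal_l _ _ _ _ H3).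
Qed.

Lemma inI_locally (a b : Rbar) (s : R) : inI a b s -> locally s (inI a b).
Proof. exact (open_and _ _ (open_Rbar_gt a) (open_Rbar_lt b) s). Qed.

Lemma inI_between (a b : Rbar) (s1 s2 t : R) :
  inI a b s1 -> inI a b s2 -> Rmin s1 s2 <= t <= Rmax s1 s2 -> inI a b t.
Proof.
  intros [Ha1 Hb1] [Ha2 Hb2] [Hmin Hmax]; split.
  - apply Rbar_lt_le_trans with (Rmin s1 s2); [|exact Hmin].
    unfold Rmin; destruct Rle_dec; assumption.
  - apply Rbar_le_lt_trans with (Rmax s1 s2); [exact Hmax|].
    unfold Rmax; destruct Rle_dec; assumption.
Qed.

Lemma constant_on_inI_iff (a b : Rbar) (f f' : R -> R) :
  (forall t, inI a b t -> is_derive f t (f' t)) ->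
  constant_on (inI a b) f <-> (forall t, inI a b t -> f' t = 0).
Proof.
  intros Hf; split.
  - intros [c Hc] t Ht.
    assert (Hzero : is_derive f t 0).
    { apply (is_derive_ext_loc (fun _ => c)).
      - eapply filter_imp; [|exact (inI_locally a b t Ht)].
        intros r Hr; symmetry; auto.
      - exact (@is_derive_const R_AbsRing R_NormedModule c t). }
    rewrite <- (is_derive_unique _ _ _ (Hf t Ht)).
    exact (is_derive_unique _ _ _ Hzero).
  - intros Hf'.
    destruct (classic (exists s0, inI a b s0)) as [[s0 Hs0] | Hempty].
    2: { exists 0; intros s Hs; exfalso; eauto. }
    exists (f s0); intros s Hs.
    destruct (MVT_gen f s0 s f') as (c & Hc & Hmvt).
    + intros t Ht; apply Hf, (inI_between a b s0 s); auto; lra.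
    + intros t Ht; apply continuity_pt_filterlim, (@ex_derive_continuous R_AbsRing R_NormedModule).
      exists (f' t); apply Hf, (inI_between a b s0 s); auto.
    + rewrite (Hf' c (inI_between a b s0 s c Hs0 Hs Hc)) in Hmvt; lra.
Qed.

Lemma inI_image (a b : Rbar) (phi : R -> R) (s : R) : inI a b s -> image phi (inI a b) (phi s).
Proof. now exists s. Qed.

Section IndicatrixArcLength.

Variables (a b : Rbar) (kappa phi : R -> R).
Hypothesis kappa_pos : forall s, inI a b s -> 0 < kappa s.
Hypothesis phi_derive : forall s, inI a b s -> is_derive phi s (kappa s).

Lemma normal_eq_indicatrix_tangent (T N alphaT TT : R -> V3) :
  (forall s, inI a b s -> alphaT (phi s) = T s) ->
  (forall s, inI a b s -> vderiv T s (vscal (kappa s) (N s))) ->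
  (forall s, inI a b s -> vderiv alphaT (phi s) (TT (phi s))) ->
  forall s, inI a b s -> N s = TT (phi s).
Proof.
  intros HaT HT HalphaT s Hs.
  apply (vscal_inj (kappa s)); [apply Rgt_not_eq, kappa_pos, Hs|].
  apply (vderiv_unique T s); [auto|].
  apply vderiv_ext_loc with (fun s => alphaT (phi s)).
  - eapply filter_imp; [|exact (inI_locally a b s Hs)]; exact HaT.
  - apply vderiv_comp; auto.
Qed.

Lemma tangent_constant_iff_normal_orthogonal (c Tc Nc Bc : R -> V3) (k t : R -> R) (u : V3) :
  frenet (image phi (inI a b)) c Tc Nc Bc k t ->
  constant_on (inI a b) (fun s => dot (Tc (phi s)) u) <->
  (forall s, inI a b s -> dot (Nc (phi s)) u = 0).
Proof.
  intros Hc.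
  rewrite (constant_on_inI_iff a b _
             (fun s => dot (vscal (kappa s) (vscal (k (phi s)) (Nc (phi s)))) u)).
  - split; intros H s Hs; specialize (H s Hs);
      destruct (Hc (phi s) (inI_image a b phi s Hs)) as (_ & _ & _ & _ & _ & _ & _ & _ & Hk);
      pose proof (kappa_pos s Hs); rewrite !dot_vscal_l in *.
    + apply Rmult_integral in H as [H | H]; [lra|].
      apply Rmult_integral in H as [H | H]; [lra | exact H].
    + rewrite H; ring.
  - intros s Hs; apply is_derive_dot_l, vderiv_comp; [|auto].
    apply (Hc (phi s) (inI_image a b phi s Hs)).
Qed.

End IndicatrixArcLength.

Theorem theorem5p7 (a b : Rbar)
  (alpha T N B : R -> V3) (kappa tau : R -> R)
  (phi : R -> R)
  (alphaT TT NT BT : R -> V3) (kappaT tauT : R -> R)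
  (x y z : R -> R)
  (beta Tb Nb Bb : R -> V3) (kappab taub : R -> R) :
  Rbar_lt a b ->
  (* alpha : I -> R^3 unit speed with Frenet apparatus {T,N,B,kappa>0,tau} *)
  frenet (inI a b) alpha T N B kappa tau ->
  (* s_T = phi s is an arc length of the tangent indicatrix: phi' = kappa *)
  (forall s, inI a b s -> is_derive phi s (kappa s)) ->
  (* alphaT is the tangent indicatrix parametrized by s_T *)
  (forall s, inI a b s -> alphaT (phi s) = T s) ->
  frenet (image phi (inI a b)) alphaT TT NT BT kappaT tauT ->
  (* beta is an X-direction curve of alphaT, X = x T_T + y N_T + z B_T *)
  (forall r, image phi (inI a b) r -> x r ^ 2 + y r ^ 2 + z r ^ 2 = 1) ->
  (forall r, image phi (inI a b) r ->
     Tb r = vadd (vadd (vscal (x r) (TT r)) (vscal (y r) (NT r))) (vscal (z r) (BT r))) ->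
  frenet (image phi (inI a b)) beta Tb Nb Bb kappab taub ->
  (* Bertrand-direction curve: N_beta = N_T *)
  (forall r, image phi (inI a b) r -> Nb r = NT r) ->
  (is_slant_helix (inI a b) N <-> is_helix (image phi (inI a b)) Tb).
Proof.
  (* Of the X-direction data only N_beta = N_T matters. *)
  intros _ Halpha Hphi HaT HalphaT _ _ Hbeta HNb.
  assert (Hkappa : forall s, inI a b s -> 0 < kappa s)
    by (intros s Hs; apply (Halpha s Hs)).
  assert (HN : forall s, inI a b s -> N s = TT (phi s)).
  { apply (normal_eq_indicatrix_tangent a b kappa phi Hkappa Hphi T N alphaT TT HaT);
      intros s Hs.
    - apply (Halpha s Hs).
    - apply (HalphaT (phi s) (inI_image a b phi s Hs)). }
  assert (Haxis : forall u, constant_on (inI a b) (fun s => dot (N s) u) <->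
                            constant_on (image phi (inI a b)) (fun r => dot (Tb r) u)).
  { intros u.
    rewrite (constant_on_ext _ _ (fun s => dot (TT (phi s)) u))
      by (intros s Hs; now rewrite HN).
    rewrite constant_on_image,
      (tangent_constant_iff_normal_orthogonal a b kappa phi Hkappa Hphi _ _ _ _ _ _ u HalphaT),
      (tangent_constant_iff_normal_orthogonal a b kappa phi Hkappa Hphi _ _ _ _ _ _ u Hbeta).
    split; intros H s Hs; specialize (H s Hs);
      rewrite HNb in * by exact (inI_image a b phi s Hs); exact H. }
  split; intros (u & Hu & Hc); exists u; split; auto; apply Haxis, Hc.
Qed.
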